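(* Let $\kappa$ be a regular uncountable limit cardinal, and let $J_\kappa=\{X\subseteq\kappa:\exists f:X\to\kappa\ \exists\theta<\kappa\ (f \text{ is regressive and } |f^{-1}(\{\eta\})|\le\theta \text{ for all }\eta<\kappa)\}$. Then $J_\kappa$ is not prepleasant: with $L'=\{\lambda+1:\lambda<\kappa \text{ an infinite cardinal}\}$ and $A_{\lambda+1}=(\lambda+1,\lambda^+)$ for $\lambda+1\in L'$, one has $L'\in J_\kappa$, each $A_{\lambda+1}$ bounded in $\kappa$, but $L'\cup\bigtriangledown_{\lambda+1\in L'}A_{\lambda+1}\notin J_\kappa$.
   Context: A function $f:X\to\kappa$ with $X\subseteq\kappa$ is regressive if $f(\alpha)<\alpha$ for all $\alpha\in X\setminus\{0\}$. For $A\subseteq\kappa$ and $X_\alpha\subseteq\kappa$, $\bigtriangledown_{\alpha\in A}X_\alpha=\{\xi<\kappa:\exists\alpha<\xi\,(\alpha\in A\wedge \xi\in X_\alpha)\}$. An ideal $I$ on $\kappa$ is prepleasant if for every $Q\in I$ and every sequence $\langle B_\alpha\rangle_{\alpha<\kappa}$ of bounded subsets of $\kappa$, $\bigtriangledown_{\alpha\in Q}B_\alpha\in I$. $(\lambda+1,\lambda^+)$ denotes the open ordinal interval. *)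

From HB Require Import structures.
From mathcomp Require Import all_boot all_order.
From mathcomp Require Import boolp classical_sets functions cardinality.
Set Implicit Arguments. Unset Strict Implicit. Unset Printing Implicit Defensive.
Local Open Scope classical_set_scope.
Local Open Scope card_scope.

(* The cardinal kappa is modelled as its set of ordinals: a type T with a
   strict well-order lt (T = {alpha | alpha < kappa}). *)
Definition strict_well_order (T : Type) (lt : T -> T -> Prop) : Prop :=
  (forall x, ~ lt x x) /\
  (forall x y z, lt x y -> lt y z -> lt x z) /\
  (forall x y, lt x y \/ x = y \/ lt y x) /\
  well_founded lt.

(* initial segment {beta | beta < alpha}, of cardinality |alpha| *)
Definition seg (T : Type) (lt : T -> T -> Prop) (a : T) : set T := [set b | lt b a].

Definition is_cardinal_type (T : Type) (lt : T -> T -> Prop) : Prop :=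
  forall a : T, ~ ([set: T] #<= seg lt a).

Definition uncountable_type (T : Type) : Prop := ~ ([set: T] #<= [set: nat]).

Definition bounded (T : Type) (lt : T -> T -> Prop) (B : set T) : Prop :=
  exists b, forall x, B x -> lt x b.

Definition regular_type (T : Type) (lt : T -> T -> Prop) : Prop :=
  forall A : set T, ~ bounded lt A -> [set: T] #<= A.

Definition limit_cardinal_type (T : Type) (lt : T -> T -> Prop) : Prop :=
  forall a : T, exists b : T, ~ (seg lt b #<= seg lt a).

Definition infinite_cardinal (T : Type) (lt : T -> T -> Prop) (l : T) : Prop :=
  infinite_set (seg lt l) /\ (forall b, lt b l -> ~ (seg lt l #<= seg lt b)).

Definition is_succ (T : Type) (lt : T -> T -> Prop) (l s : T) : Prop :=
  lt l s /\ forall x, lt l x -> s = x \/ lt s x.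

Definition is_card_succ (T : Type) (lt : T -> T -> Prop) (l c : T) : Prop :=
  ~ (seg lt c #<= seg lt l) /\
  forall x, ~ (seg lt x #<= seg lt l) -> c = x \/ lt c x.

(* regressive on X: f alpha < alpha for alpha in X \ {0} *)
Definition regressive (T : Type) (lt : T -> T -> Prop) (X : set T) (f : T -> T) : Prop :=
  forall a, X a -> (exists b, lt b a) -> lt (f a) a.

Definition Jk (T : Type) (lt : T -> T -> Prop) (X : set T) : Prop :=
  exists (f : T -> T) (th : T), regressive lt X f /\
    forall eta : T, (X `&` [set a | f a = eta]) #<= seg lt th.

Definition diag_union (T : Type) (lt : T -> T -> Prop) (A : set T) (Xs : T -> set T) : set T :=
  [set xi | exists a, lt a xi /\ A a /\ Xs a xi].

Definition prepleasant (T : Type) (lt : T -> T -> Prop) (I : set T -> Prop) : Prop :=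
  forall (Q : set T) (B : T -> set T), I Q -> (forall a, bounded lt (B a)) ->
    I (diag_union lt Q B).

Definition Lprime (T : Type) (lt : T -> T -> Prop) : set T :=
  [set s | exists l, infinite_cardinal lt l /\ is_succ lt l s].

(* A_{lambda+1} = (lambda+1, lambda^+); empty for indices outside L' *)
Definition Aseq (T : Type) (lt : T -> T -> Prop) (s : T) : set T :=
  [set xi | exists l c, infinite_cardinal lt l /\ is_succ lt l s /\
     is_card_succ lt l c /\ lt s xi /\ lt xi c].

(* Fix an infinite cardinal l < kappa. Hessenberg's l * l = l (proved with
   Goedel's pairing order) makes the successor cardinal l^+ regular. If f is
   regressive on a set containing the interval (l + 1, l^+) and its fibers have
   size <= l, then for a < l^+ the points of the interval with f <= a number at
   most l, hence are bounded below l^+; an omega-chain of such bounds has a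
   supremum g inside the interval that bounds every point where f <= f g,
   although f g < g. As kappa is a limit cardinal, l can be taken above any
   fiber bound theta, so no superset of the diagonal union of the intervals is
   in J_kappa, while L' is in J_kappa through the predecessor map. *)

From mathcomp Require Import all_boot all_order.
From mathcomp Require Import boolp classical_sets functions cardinality.
From Stdlib Require Import Relation_Operators Lexicographic_Product Inverse_Image.
Set Implicit Arguments. Unset Strict Implicit. Unset Printing Implicit Defensive.
Local Open Scope classical_set_scope.
Local Open Scope card_scope.

Lemma card_le_inj (T U : Type) (A : set T) (B : set U) (f : T -> U) :
  (forall x, A x -> B (f x)) -> (forall x y, A x -> A y -> f x = f y -> x = y) ->
  A #<= B.
Proof.
move=> fAB finj; have [g] : $|{injfun A >-> B}|.
  apply/injfunPex; exists f => [x|x y]; rewrite ?in_setE; first exact: fAB.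
  exact: finj.
exact: inj_card_le.
Qed.

Lemma card_le_exists_inj (T U : Type) (A : set T) (B : set U) (u0 : U) :
  A #<= B -> exists f : T -> U, (forall x, A x -> B (f x)) /\
     (forall x y, A x -> A y -> f x = f y -> x = y).
Proof.
move=> /card_leP[g].
exists (fun x => if pselect (A x) is left Ax then val (g (SigSub (mem_set Ax))) else u0).
split=> [x Ax|x y Ax Ay]; case: pselect => // Ax'.
  by have := valP (g (SigSub (mem_set Ax'))); rewrite in_setE.
case: pselect => // Ay' /val_inj/(@inj _ _ _ g) gxy.
by have [] := gxy (mem_set I) (mem_set I).
Qed.

Lemma card_le_nonempty (T U : Type) (A : set T) (B : set U) :
  A #<= B -> A !=set0 -> B !=set0.
Proof.
move=> AB [x Ax]; have [B0|/set0P//] := eqVneq B set0.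
by move: AB; rewrite B0 => /card_le0P A0; rewrite A0 in Ax.
Qed.

Lemma card_leX (T T' U U' : Type) (A : set T) (B : set T') (A' : set U) (B' : set U') :
  A #<= A' -> B #<= B' -> A `*` B #<= A' `*` B'.
Proof.
move=> AA' BB'.
have [->|/set0P[[a b] [/= Aa Bb]]] := eqVneq (A `*` B) set0; first exact: card_ge0.
have [a' _] := card_le_nonempty AA' (ex_intro _ a Aa).
have [b' _] := card_le_nonempty BB' (ex_intro _ b Bb).
have [f [fA finj]] := card_le_exists_inj a' AA'.
have [g [gB ginj]] := card_le_exists_inj b' BB'.
apply: (@card_le_inj _ _ _ _ (fun p => (f p.1, g p.2))) => [p [/fA ? /gB ?]//|].
by move=> [x1 x2] [y1 y2] [/= ? ?] [/= ? ?] [/finj-> // /ginj->].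
Qed.

Lemma card_bigcup_le (I T U V : Type) (S : set I) (F : I -> set T)
    (A : set U) (B : set V) :
  S #<= A -> (forall i, S i -> F i #<= B) -> \bigcup_(i in S) F i #<= A `*` B.
Proof.
move=> SA FB.
have [->|/set0P[x [i Si Fix]]] := eqVneq (\bigcup_(i in S) F i) set0.
  exact: card_ge0.
have [u0 _] := card_le_nonempty SA (ex_intro _ i Si).
have [v0 _] := card_le_nonempty (FB i Si) (ex_intro _ x Fix).
have [e [eA einj]] := card_le_exists_inj u0 SA.
have inj_fibers j : exists gj : T -> V, S j ->
    (forall x, F j x -> B (gj x)) /\ (forall x y, F j x -> F j y -> gj x = gj y -> x = y).
  have [Sj|nSj] := pselect (S j); last by exists (fun=> v0) => /nSj.
  by have [gj ?] := card_le_exists_inj v0 (FB j Sj); exists gj.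
have [g gB] := choice inj_fibers.
have index y : exists j, (\bigcup_(i in S) F i) y -> S j /\ F j y.
  have [[j Sj Fjy]|nFy] := pselect ((\bigcup_(i in S) F i) y); first by exists j.
  by exists i => /nFy.
have [k kS] := choice index.
apply: (@card_le_inj _ _ _ _ (fun x => (e (k x), g (k x) x))).
  by move=> y /kS[Sky Fky]; split; [apply: eA|apply: (gB _ Sky).1].
move=> y z /kS[Sky Fky] /kS[Skz Fkz] [/einj kyz gyz].
rewrite -kyz // in Fkz gyz; exact: (gB _ Sky).2 gyz.
Qed.

Lemma card_preimage_le (T U V : Type) (X : set T) (f : T -> U) (A : set U) (B : set V) :
  (forall u, A u -> X `&` f @^-1` [set u] #<= B) -> X `&` f @^-1` A #<= A `*` B.
Proof.
move=> fibB; apply: card_le_trans (card_bigcup_le (card_lexx A) fibB).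
by apply: subset_card_le => x [Xx Afx]; exists (f x).
Qed.

(* Hilbert's hotel along an injection [e] of [nat] into [A]. *)
Lemma card_setU1_le (T : Type) (A : set T) (x : T) :
  infinite_set A -> A `|` [set x] #<= A.
Proof.
move=> /infiniteP Ainf; have [Ax|nAx] := pselect (A x).
  by apply: subset_card_le => z [//|->].
have [e [eA einj]] := card_le_exists_inj x Ainf.
have {}einj m n : e m = e n -> m = n by apply: einj.
pose shift z := if pselect (z = x) is left _ then e 0
  else if pselect (exists n, z = e n) is left en then e (projT1 (cid en)).+1 else z.
apply: (@card_le_inj _ _ _ _ shift) => [z Az|z w Az Aw].
  rewrite /shift; case: (pselect (z = x)) => zx; first exact: eA.
  by case: (pselect (exists n, z = e n)) => zr; [apply: eA|case: Az].
rewrite /shift; case: (pselect (z = x)) => zx; case: (pselect (w = x)) => wx.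
- by rewrite zx wx.
- case: (pselect (exists n, w = e n)) => [[n _] /einj //|wr e0w].
  by case: wr; exists 0.
- case: (pselect (exists n, z = e n)) => [[n _] /esym /einj //|zr ze0].
  by case: zr; exists 0.
case: (pselect (exists n, z = e n)) => zr; case: (pselect (exists n, w = e n)) => wr.
- move=> /einj[]; case: (cid zr) => n /= ->; by case: (cid wr) => m /= -> ->.
- by case: (cid zr) => n /= _ ezw; case: wr; exists n.+1.
- by case: (cid wr) => n /= _ zew; case: zr; exists n.+1.
- by [].
Qed.

Section WellOrder.
Variables (T : Type) (lt : T -> T -> Prop).
Hypothesis lt_wo : strict_well_order lt.

Lemma wo_irr x : ~ lt x x.
Proof. by case: lt_wo. Qed.

Lemma wo_trans x y z : lt x y -> lt y z -> lt x z.
Proof. by case: lt_wo => _ [+ _]; apply. Qed.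

Lemma wo_total x y : lt x y \/ x = y \/ lt y x.
Proof. by case: lt_wo => _ [_ [+ _]]. Qed.

Lemma wo_wf : well_founded lt.
Proof. by case: lt_wo => _ [_ []]. Qed.

Lemma wo_asym x y : lt x y -> ~ lt y x.
Proof. by move=> xy yx; apply: (wo_irr (wo_trans xy yx)). Qed.

Lemma wo_nlt x y : ~ lt x y -> lt y x \/ y = x.
Proof. by case: (wo_total x y) => [//|[->|]]; [right|left]. Qed.

Lemma wo_le_lt_trans x y z : ~ lt y x -> lt y z -> lt x z.
Proof. by move=> /wo_nlt[xy|<-] // yz; apply: wo_trans yz. Qed.

Lemma wo_lt_le_trans x y z : lt x y -> ~ lt z y -> lt x z.
Proof. by move=> xy /wo_nlt[yz|<-] //; apply: wo_trans yz. Qed.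

Lemma wo_least (P : T -> Prop) : (exists x, P x) ->
  exists x, P x /\ forall y, P y -> ~ lt y x.
Proof.
move=> [x Px]; apply: contrapT => noleast; elim/(well_founded_induction wo_wf): x Px.
by move=> x IH Px; apply: noleast; exists x; split=> // y Py /IH; apply.
Qed.

Lemma seg_subset a b : ~ lt b a -> seg lt a `<=` seg lt b.
Proof. by move=> ba x xa; apply: wo_lt_le_trans ba. Qed.

Lemma seg_card_le a b : ~ lt b a -> seg lt a #<= seg lt b.
Proof. by move/seg_subset/subset_card_le. Qed.

Lemma infinite_cardinal_limit l : infinite_cardinal lt l ->
  forall y, lt y l -> exists y', lt y y' /\ lt y' l.
Proof.
move=> [linf lcard] y yl; apply: contrapT => nosucc.
have sub : seg lt l `<=` seg lt y `|` [set y].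
  move=> z zl; case: (wo_total z y) => [zy|[->|yz]]; [by left|by right|].
  by case: nosucc; exists z.
have [yfin|yinf] := pselect (finite_set (seg lt y)).
  by apply/linf/(sub_finite_set sub); rewrite finite_setU; split=> //; apply: finite_set1.
by apply: (lcard y yl); apply: card_le_trans (subset_card_le sub) (card_setU1_le _ yinf).
Qed.

Definition pmax (p : T * T) : T := if pselect (lt p.1 p.2) then p.2 else p.1.

Lemma pmax_ge1 p : ~ lt (pmax p) p.1.
Proof. by rewrite /pmax; case: pselect => h /=; [apply: wo_asym|apply: wo_irr]. Qed.

Lemma pmax_ge2 p : ~ lt (pmax p) p.2.
Proof.
rewrite /pmax; case: pselect => h /=; first exact: wo_irr.
by case: (wo_nlt h) => [|->]; [apply: wo_asym|apply: wo_irr].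
Qed.

Lemma pmax_lt p c : lt p.1 c -> lt p.2 c -> lt (pmax p) c.
Proof. by rewrite /pmax; case: pselect. Qed.

(* Goedel's well-order on pairs: first by maximum, then lexicographically. *)
Definition godel_lt (p q : T * T) : Prop :=
  slexprod T (T * T) lt (slexprod T T lt lt) (pmax p, p) (pmax q, q).

Lemma godel_lt_wf : well_founded godel_lt.
Proof.
apply: (wf_inverse_image _ _ _ (fun p => (pmax p, p))).
by apply: wf_slexprod; [|apply: wf_slexprod]; apply: wo_wf.
Qed.

Lemma godel_lt_total p q : p <> q -> godel_lt p q \/ godel_lt q p.
Proof.
move=> pq; rewrite /godel_lt; case: (wo_total (pmax p) (pmax q)) => [|[e|]].
- by left; constructor.
- rewrite e; case: p q pq e => [p1 p2] [q1 q2] pq _.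
  case: (wo_total p1 q1) => [|[e1|]].
  + by left; constructor 2; constructor.
  + rewrite -e1; case: (wo_total p2 q2) => [|[e2|]].
    * by left; constructor 2; constructor 2.
    * by case: pq; rewrite e1 e2.
    * by right; constructor 2; constructor 2.
  + by right; constructor 2; constructor.
- by right; constructor.
Qed.

Lemma godel_lt_pmax p q : godel_lt q p -> ~ lt (pmax p) (pmax q).
Proof. by move=> qp; inversion qp; [apply: wo_asym|apply: wo_irr]. Qed.

Definition godel_below (l : T) (p : T * T) : set (T * T) :=
  [set q | godel_lt q p /\ (seg lt l `*` seg lt l) q].

Definition pick_outside (l : T) (S : set T) : T :=
  if pselect (exists y, lt y l /\ ~ S y) is left ex then projT1 (cid ex) else l.

Lemma pick_outsideP l S : (exists y, lt y l /\ ~ S y) ->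
  lt (pick_outside l S) l /\ ~ S (pick_outside l S).
Proof.
rewrite /pick_outside => ex; case: pselect => [ex'|//].
by case: (cid ex').
Qed.

(* The Goedel enumeration of [l * l]: each pair gets some ordinal below [l]
   not taken by the pairs preceding it. *)
Definition godel_enum (l : T) : T * T -> T :=
  Fix godel_lt_wf (fun _ => T) (fun p enum => pick_outside l
    [set y | exists q (qp : godel_lt q p), (seg lt l `*` seg lt l) q /\ y = enum q qp]).

Lemma godel_enumE l p :
  godel_enum l p = pick_outside l (godel_enum l @` godel_below l p).
Proof.
rewrite /godel_enum Fix_eq => [|x r1 r2 r12]; congr pick_outside.
  by apply/seteqP; split=> y [q]; [move=> [qp [lq ->]]; exists q|move=> [qp lq] <-; exists q, qp].
by apply/seteqP; split=> y [q [qp [lq ->]]]; exists q, qp; rewrite r12.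
Qed.

Lemma segX_card_lt l :
  (forall y, lt y l -> infinite_cardinal lt y -> seg lt y `*` seg lt y #<= seg lt y) ->
  infinite_cardinal lt l -> forall d, lt d l -> ~ (seg lt l #<= seg lt d `*` seg lt d).
Proof.
move=> IH [linf lcard] d dl ldd.
have [dfin|dinf] := pselect (finite_set (seg lt d)).
  by apply/linf/(card_le_finite ldd)/finite_setX.
(* [m] is the cardinal of [d]. *)
have [m [dm mmin]] := wo_least (ex_intro (fun x => seg lt d #<= seg lt x) d (card_lexx _)).
have md : ~ lt d m by move/(mmin d (card_lexx _)).
have minf : infinite_set (seg lt m) by move/(card_le_finite dm).
have mcard b : lt b m -> ~ (seg lt m #<= seg lt b).
  by move=> bm mb; apply: (mmin b) => //; apply: card_le_trans dm mb.
apply: (lcard d dl); apply: card_le_trans ldd _.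
apply: card_le_trans (card_leX dm dm) _.
apply: card_le_trans (IH m (wo_le_lt_trans md dl) (conj minf mcard)) _.
exact: seg_card_le.
Qed.

(* Hessenberg: the Goedel enumeration is injective from l * l into l, since
   by induction each proper Goedel segment of l * l is smaller than l. *)
Theorem segX_card_le l : infinite_cardinal lt l -> seg lt l `*` seg lt l #<= seg lt l.
Proof.
elim/(well_founded_induction wo_wf): l => l IH lic.
have enum_fresh p : (seg lt l `*` seg lt l) p ->
    lt (godel_enum l p) l /\ ~ (godel_enum l @` godel_below l p) (godel_enum l p).
  move=> [p1l p2l]; rewrite godel_enumE; apply: pick_outsideP; apply: contrapT => covered.
  have [m [pm ml]] := infinite_cardinal_limit lic (pmax_lt p1l p2l).
  apply: (segX_card_lt IH lic ml).
  apply: (@card_le_trans _ _ _ (godel_enum l @` godel_below l p)).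
    by apply: subset_card_le => y yl; apply: contrapT => ny; apply: covered; exists y.
  apply: card_le_trans (card_image_le _ _) (subset_card_le _).
  move=> q [/godel_lt_pmax qp _]; have qm := wo_le_lt_trans qp pm.
  by split; apply: wo_le_lt_trans qm; [apply: pmax_ge1|apply: pmax_ge2].
apply: (@card_le_inj _ _ _ _ (godel_enum l)) => [p /enum_fresh[]//|p q lp lq epq].
apply: contrapT => /godel_lt_total[pq|qp].
  by apply: (enum_fresh q lq).2; exists p.
by apply: (enum_fresh p lp).2; exists q.
Qed.

Lemma card_succ_gt l c : is_card_succ lt l c -> lt l c.
Proof. by move=> [cl _]; apply: contrapT => /seg_card_le. Qed.

Lemma card_succ_seg_le l c x : is_card_succ lt l c -> lt x c -> seg lt x #<= seg lt l.
Proof.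
move=> [_ cmin] xc; apply: contrapT => /cmin[cx|/wo_asym//].
by rewrite cx in xc; apply: wo_irr xc.
Qed.

Lemma card_succ_infinite_cardinal l c :
  infinite_cardinal lt l -> is_card_succ lt l c -> infinite_cardinal lt c.
Proof.
move=> [linf lcard] cs; split.
  by apply: sub_infinite_set linf; apply/seg_subset/wo_asym/card_succ_gt.
by move=> b bc cb; apply: cs.1; apply: card_le_trans cb (card_succ_seg_le cs bc).
Qed.

(* The successor cardinal is regular. *)
Lemma card_succ_bounded l c (S : set T) :
  infinite_cardinal lt l -> is_card_succ lt l c ->
  S `<=` seg lt c -> S #<= seg lt l -> exists2 b, lt b c & S `<=` seg lt b.
Proof.
move=> lic cs Sc Sl; apply: contrapT => unbounded.
have cover : seg lt c `<=` \bigcup_(x in S) seg lt x.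
  move=> y yc; apply: contrapT => ny.
  have [y' [yy' y'c]] := infinite_cardinal_limit (card_succ_infinite_cardinal lic cs) yc.
  apply: unbounded; exists y' => // x Sx; apply: contrapT => xy'.
  by apply: ny; exists x => //; apply: wo_lt_le_trans yy' xy'.
apply: cs.1; apply: card_le_trans (subset_card_le cover) _.
apply: card_le_trans (segX_card_le lic).
by apply: card_bigcup_le Sl _ => x /Sc; apply: card_succ_seg_le.
Qed.

(* [g] is the supremum of an omega-chain starting at [s], each element
   bounding [P] of its predecessor. *)
Lemma ex_closed_below c (P : T -> set T) s :
  (forall a b, ~ lt b a -> P a `<=` P b) ->
  (forall a, lt a c -> exists2 b, lt b c & P a `<=` seg lt b) ->
  (forall S, S `<=` seg lt c -> countable S -> exists2 b, lt b c & S `<=` seg lt b) ->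
  lt s c -> exists g, [/\ lt s g, lt g c & forall a, lt a g -> P a `<=` seg lt g].
Proof.
move=> Pmono Pbound cbounded sc.
have step a : exists b, lt a c -> lt b c /\ P a `<=` seg lt b.
  have [ac|nac] := pselect (lt a c); last by exists a.
  by have [b bc Pab] := Pbound a ac; exists b.
have [next nextP] := choice step.
pose gs n := iter n next s.
have gsc n : lt (gs n) c by elim: n => [//|n IH]; have [] := nextP _ IH.
have [B Bc gsB] : exists2 B, lt B c & range gs `<=` seg lt B.
  by apply: cbounded; [move=> _ [n _ <-]|apply: card_image_le].
have [g [gub gmin]] := wo_least (ex_intro (fun x => forall n, lt (gs n) x) B
  (fun n => gsB _ (ex_intro2 _ _ n I erefl))).
exists g; split=> [||a ag x Pax]; first exact: gub 0.
  by apply: wo_le_lt_trans Bc; apply: gmin => n; apply: gsB; exists n.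
have [n gsa] : exists n, ~ lt (gs n) a.
  by apply: contrapT => /forallNP gsa; apply: (gmin a) => // n; apply: contrapT; apply: gsa.
have /(nextP _ (gsc n)).2 /= xgs := Pmono _ _ gsa x Pax.
exact: wo_trans xgs (gub n.+1).
Qed.

(* Fodor-type argument: a closure point g of the sublevel sets of f lies in X,
   yet f g < g forces g < g. *)
Lemma regressive_large_fiber l c s (X : set T) (f : T -> T) :
  infinite_cardinal lt l -> is_card_succ lt l c -> lt s c ->
  (forall x, lt s x -> lt x c -> X x) -> regressive lt X f ->
  ~ (forall eta, X `&` [set a | f a = eta] #<= seg lt l).
Proof.
move=> lic cs sc sX freg fibers.
have cic := card_succ_infinite_cardinal lic cs.
pose P a := [set x | [/\ lt s x, lt x c & ~ lt a (f x)]].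
have [|a ac|S Sc Scount|//|g [sg gc gclosed]] := @ex_closed_below c P s.
- move=> a b ba x [sx xc axf]; split=> // bfx.
  by apply: axf; apply: wo_le_lt_trans ba bfx.
- have [a' [aa' a'c]] := infinite_cardinal_limit cic ac.
  apply: (card_succ_bounded lic cs (fun x '(And3 _ xc _) => xc)).
  apply: (@card_le_trans _ _ _ (X `&` f @^-1` seg lt a')).
    apply: subset_card_le => x [sx xc axf]; split; first exact: sX.
    exact: wo_le_lt_trans axf aa'.
  apply: card_le_trans (card_preimage_le (fun eta _ => fibers eta)) _.
  apply: card_le_trans (segX_card_le lic).
  exact: card_leX (card_succ_seg_le cs a'c) (card_lexx _).
- apply: (card_succ_bounded lic cs Sc); apply: card_le_trans Scount _.
  by apply/infiniteP; case: lic.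
have fgg : lt (f g) g := freg g (sX g sg gc) (ex_intro _ s sg).
have /(gclosed _ fgg) := And3 sg gc (@wo_irr (f g)).
exact: wo_irr.
Qed.

Lemma wo_min_unique (P : T -> Prop) a b : P a -> P b ->
  (forall x, P x -> a = x \/ lt a x) -> (forall x, P x -> b = x \/ lt b x) -> a = b.
Proof.
move=> Pa Pb amin bmin; case: (amin b Pb) => [//|ab].
by case: (bmin a Pa) => [//|/wo_asym].
Qed.

Lemma is_succ_fun l s s' : is_succ lt l s -> is_succ lt l s' -> s = s'.
Proof. by move=> [ls smin] [ls' s'min]; apply: wo_min_unique ls ls' smin s'min. Qed.

Lemma is_card_succ_fun l c c' : is_card_succ lt l c -> is_card_succ lt l c' -> c = c'.
Proof. by move=> [lc cmin] [lc' c'min]; apply: wo_min_unique lc lc' cmin c'min. Qed.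

Lemma is_succ_inj l l' s : is_succ lt l s -> is_succ lt l' s -> l = l'.
Proof.
have below a b : lt a b -> is_succ lt a s -> ~ lt b s.
  move=> ab [_ amin] bs; case: (amin b ab) => [sb|/wo_asym//].
  by rewrite sb in bs; apply: wo_irr bs.
move=> ls l's; case: (wo_total l l') => [ll'|[//|l'l]].
  by case: (below _ _ ll' ls l's.1).
by case: (below _ _ l'l l's ls.1).
Qed.

Lemma succ_lt_card_succ l s c :
  infinite_cardinal lt l -> is_succ lt l s -> is_card_succ lt l c -> lt s c.
Proof.
move=> lic [ls smin] cs.
have [y [ly yc]] := infinite_cardinal_limit (card_succ_infinite_cardinal lic cs)
  (card_succ_gt cs).
by case: (smin y ly) => [->//|sy]; apply: wo_trans sy yc.
Qed.

(* [t] bounds [Aseq lt s], which is empty for [s] outside [L']. *)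
Lemma Aseq_bounded (t : T) s : bounded lt (Aseq lt s).
Proof.
have [[x [l [c [_ [ls [cs _]]]]]]|noA] := pselect (exists x, Aseq lt s x).
  exists c => y [l' [c' [_ [l's [c's [_ yc']]]]]].
  by rewrite (is_card_succ_fun cs (_ : is_card_succ lt l c')) // (is_succ_inj ls l's).
by exists t => x Ax; case: noA; exists x.
Qed.

Hypothesis lt_limit : limit_cardinal_type lt.

Lemma wo_no_max a : exists b, lt a b.
Proof.
have [b ba] := lt_limit a; exists b.
by apply: contrapT => /seg_card_le.
Qed.

Lemma ex_is_succ l : exists s, is_succ lt l s.
Proof.
have [s [ls smin]] := wo_least (wo_no_max l).
by exists s; split=> // x /smin/wo_nlt[sx|->]; [right|left].
Qed.

Lemma ex_is_card_succ l : exists c, is_card_succ lt l c.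
Proof.
have [c [lc cmin]] := wo_least (lt_limit l).
by exists c; split=> // x /cmin/wo_nlt[cx|->]; [right|left].
Qed.

Lemma Jk_Lprime (t : T) : Jk lt (Lprime lt).
Proof.
have pred_ex s : exists l, Lprime lt s -> is_succ lt l s.
  have [[l [_ ls]]|nL] := pselect (Lprime lt s); first by exists l.
  by exists s => /nL.
have [pred predP] := choice pred_ex.
have [th tth] := wo_no_max t.
exists pred, th; split=> [s Ls _|eta]; first by case: (predP s Ls).
apply: (@card_le_inj _ _ _ _ (fun=> t)) => [//|x y [Lx px] [Ly py] _].
by apply: is_succ_fun (predP x Lx) _; rewrite /= px -py; apply: predP.
Qed.

Hypotheses (T_uncountable : uncountable_type T) (lt_regular : regular_type lt).

Lemma ex_infinite_seg (t : T) : exists w, infinite_set (seg lt w).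
Proof.
have [next nextP] := choice wo_no_max.
pose e n := iter n next t.
have e_incr m n : (m < n)%N -> lt (e m) (e n).
  elim: n => [//|n IH]; rewrite ltnS leq_eqVlt => /orP[/eqP->|mn]; first exact: nextP.
  exact: wo_trans (IH mn) (nextP _).
have [w ew] : bounded lt (range e).
  apply: contrapT => /lt_regular Te; apply: T_uncountable.
  exact: card_le_trans Te (card_image_le _ _).
exists w; apply/infiniteP; apply: (@card_le_inj _ _ _ _ e) => [n _|m n _ _ emn].
  by apply: ew; exists n.
by apply/eqP; case: ltngtP => // /e_incr; rewrite emn => /wo_irr.
Qed.

Lemma ex_infinite_cardinal_gt th : exists2 l, infinite_cardinal lt l & lt th l.
Proof.
pose big x := infinite_set (seg lt x) /\ ~ (seg lt x #<= seg lt th).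
have [w winf] := ex_infinite_seg th; have [b bth] := lt_limit th.
have [l [[linf lth] lmin]] : exists l, big l /\ forall y, big y -> ~ lt y l.
  apply: wo_least; exists (pmax (b, w)); split.
    exact: sub_infinite_set (seg_subset (@pmax_ge2 (b, w))) winf.
  by move=> /(card_le_trans (seg_card_le (@pmax_ge1 (b, w)))).
exists l; last by apply: contrapT => /seg_card_le.
split=> // y yl ly; have [yfin|yinf] := pselect (finite_set (seg lt y)).
  exact/linf/(card_le_finite ly).
apply: (lmin y) => //; split=> // yth.
exact/lth/(card_le_trans ly).
Qed.

Lemma not_Jk_diag_superset (X : set T) :
  diag_union lt (Lprime lt) (Aseq lt) `<=` X -> ~ Jk lt X.
Proof.
move=> DX [f [th [freg fibers]]].
have [l lic thl] := ex_infinite_cardinal_gt th.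
have [s ls] := ex_is_succ l; have [c cs] := ex_is_card_succ l.
apply: (regressive_large_fiber lic cs (succ_lt_card_succ lic ls cs) _ freg).
  move=> x sx xc; apply: DX; exists s; split=> //; split; first by exists l.
  by exists l, c.
by move=> eta; apply: card_le_trans (fibers eta) (seg_card_le (wo_asym thl)).
Qed.

End WellOrder.

Theorem mainTheorem7 (T : Type) (lt : T -> T -> Prop)
  (Hwo : strict_well_order lt) (Hcard : is_cardinal_type lt)
  (Hunc : uncountable_type T) (Hreg : regular_type lt)
  (Hlim : limit_cardinal_type lt) :
  ~ prepleasant lt (Jk lt) /\
  Jk lt (Lprime lt) /\
  (forall s, Lprime lt s -> bounded lt (Aseq lt s)) /\
  ~ Jk lt (Lprime lt `|` diag_union lt (Lprime lt) (Aseq lt)).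
Proof.
have [t _] : exists t : T, True.
  apply: contrapT => noT; apply: Hunc.
  by apply: (@card_le_inj _ _ _ _ (fun=> 0%N)) => x; case: noT; exists x.
have notJ := not_Jk_diag_superset Hwo Hlim Hunc Hreg.
have LJ := Jk_Lprime Hwo Hlim t.
split=> [prepl|]; first exact: notJ (prepl _ _ LJ (Aseq_bounded Hwo t)).
split=> //; split=> [s _|]; first exact: Aseq_bounded.
by apply: notJ => x; right.
Qed.
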